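(* Let $d \ge 1$ and $k \ge 1$ be integers. If $P \subseteq \mathbb{R}^d$ is a convex lattice polytope (all vertices in $\mathbb{Z}^d$) that does not contain a lattice segment of length $k$, then $|P \cap \mathbb{Z}^d| \le k^d$.
   Context: For $x,y \in \mathbb{Z}^d$, the line segment $[x,y]$ is called a lattice segment of length $m-1$ if $|[x,y]\cap \mathbb{Z}^d| = m$. Equivalently, a lattice segment of length $k$ is the convex hull of a set $\{x, x+z, x+2z,\dots,x+kz\}$ with $x,z\in\mathbb{Z}^d$, $z \ne 0$, and $z$ primitive; and $P$ contains a lattice segment of length $k$ if and only if $P$ contains a set $\{x, x+z, \dots, x+kz\}$ with $x,z\in\mathbb{Z}^d$, $z\neq 0$. *)

From HB Require Import structures.
From mathcomp Require Import all_boot all_order all_algebra.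
Set Implicit Arguments. Unset Strict Implicit. Unset Printing Implicit Defensive.
Import Order.TTheory GRing.Theory Num.Theory.
Local Open Scope ring_scope.

Definition lat_to_real (R : realFieldType) (d : nat) (x : 'rV[int]_d) : 'rV[R]_d :=
  map_mx (fun z : int => z%:~R) x.

(* The convex lattice polytope P = conv(V), V a finite list of lattice points:
   y \in P iff y is a convex combination of the points of V. *)
Definition in_conv_hull (R : realFieldType) (d : nat) (V : seq 'rV[int]_d)
    (y : 'rV[R]_d) : Prop :=
  exists w : 'I_(size V) -> R,
    (forall i, 0 <= w i) /\ \sum_i w i = 1 /\
    y = \sum_i w i *: lat_to_real R (nth 0 V i).

(* P contains a lattice segment of length k: P contains a set
   {x, x+z, ..., x+kz} with x, z in Z^d, z <> 0. *)
Definition contains_lattice_segment (R : realFieldType) (d : nat)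
    (V : seq 'rV[int]_d) (k : nat) : Prop :=
  exists (x z : 'rV[int]_d), z != 0 /\
    forall j : nat, (j <= k)%N -> @in_conv_hull R d V (lat_to_real R (x + z *+ j)).

From HB Require Import structures.
From mathcomp Require Import all_boot all_order all_algebra.
From mathcomp Require Import reals.
Import Order.TTheory GRing.Theory Num.Theory.
Local Open Scope ring_scope.

(* Two distinct lattice points of P with the same residues modulo k differ by
   k z for a nonzero lattice vector z, and by convexity P then contains the
   whole segment {p, p + z, ..., p + k z}.  Hence reduction modulo k is
   injective on the lattice points of P, which therefore number at most k^d. *)

Section ConvexHull.

Variables (R : realFieldType) (d : nat) (V : seq 'rV[int]_d).

Lemma in_conv_hull_convex (y1 y2 : 'rV[R]_d) (t : R) :
  0 <= t -> t <= 1 -> in_conv_hull V y1 -> in_conv_hull V y2 ->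
  in_conv_hull V ((1 - t) *: y1 + t *: y2).
Proof.
move=> t_ge0 t_le1 [w1 [w1_ge0 [w1_sum ->]]] [w2 [w2_ge0 [w2_sum ->]]].
exists (fun i => (1 - t) * w1 i + t * w2 i); split; [|split].
- by move=> i; rewrite addr_ge0 ?mulr_ge0 ?subr_ge0.
- by rewrite big_split /= -!mulr_sumr w1_sum w2_sum !mulr1 subrK.
- rewrite !scaler_sumr -big_split /=; apply: eq_bigr => i _.
  by rewrite [RHS]scalerDl !scalerA.
Qed.

Lemma in_conv_hull_segment (x z : 'rV[R]_d) (k j : nat) :
  (0 < k)%N -> (j <= k)%N ->
  in_conv_hull V x -> in_conv_hull V (x + z *+ k) -> in_conv_hull V (x + z *+ j).
Proof.
move=> k_gt0 j_le_k x_in xk_in.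
have k_neq0 : (k%:R : R) != 0 by rewrite pnatr_eq0 -lt0n.
set t : R := j%:R / k%:R.
have t_ge0 : 0 <= t by rewrite divr_ge0 ?ler0n.
have t_le1 : t <= 1 by rewrite ler_pdivrMr ?ltr0n // mul1r ler_nat.
suff -> : x + z *+ j = (1 - t) *: x + t *: (x + z *+ k).
  exact: in_conv_hull_convex.
rewrite scalerBl scale1r scalerDr -[z *+ k]scaler_nat scalerA divfK //.
by rewrite scaler_nat addrA subrK.
Qed.

End ConvexHull.

Lemma lat_to_real_shift (R : realFieldType) (d : nat) (x z : 'rV[int]_d) (j : nat) :
  lat_to_real R (x + z *+ j) = lat_to_real R x + lat_to_real R z *+ j.
Proof. by rewrite /lat_to_real map_mxD raddfMn. Qed.

Definition row_residue (k : nat) {d : nat} (p : 'rV[int]_d) : {ffun 'I_d -> 'I_k.+1} :=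
  [ffun i => inord `|(p ord0 i %% k.+1)%Z|%N].

Lemma row_residue_eq (k d : nat) (p q : 'rV[int]_d) :
  row_residue k p = row_residue k q -> exists z : 'rV[int]_d, q = p + z *+ k.+1.
Proof.
move=> res_pq.
have modE i : (q ord0 i = p ord0 i %[mod k.+1])%Z.
  have := congr1 (fun f : {ffun 'I_d -> 'I_k.+1} => val (f i)) res_pq; rewrite /= !ffunE.
  rewrite !inordK -?ltz_nat ?gez0_abs ?modz_ge0 ?ltz_pmod // => /(congr1 Posz).
  by rewrite !gez0_abs ?modz_ge0.
exists (\row_i ((q ord0 i - p ord0 i) %/ k.+1)%Z).
apply/matrixP => a i; rewrite ord1 -scaler_nat !mxE natz mulrC.
by rewrite divzK -?eqz_mod_dvd ?modE // addrC subrK.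
Qed.

Lemma size_le_card_in_inj (T : eqType) (U : finType) (f : T -> U) (s : seq T) :
  uniq s -> {in s &, injective f} -> (size s <= #|U|)%N.
Proof.
move=> s_uniq f_inj; rewrite -(size_map f).
have /card_uniqP <- : uniq (map f s) by rewrite map_inj_in_uniq.
exact: max_card.
Qed.

Theorem proposition3p2 (R : realType) (d k : nat) (V : seq 'rV[int]_d) :
  (1 <= d)%N -> (1 <= k)%N ->
  ~ @contains_lattice_segment R d V k ->
  forall S : seq 'rV[int]_d, uniq S ->
    (forall p, p \in S -> @in_conv_hull R d V (lat_to_real R p)) ->
    (size S <= k ^ d)%N.
Proof.
move=> _ k_ge1 no_segment S S_uniq S_in_P.
case: k k_ge1 no_segment => [//|k] _ no_segment.
have <- : #|{ffun 'I_d -> 'I_k.+1}| = (k.+1 ^ d)%N by rewrite card_ffun !card_ord.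
apply: (@size_le_card_in_inj _ _ (row_residue k)) => // p q p_in q_in.
move=> /row_residue_eq [z q_def].
case: (eqVneq z 0) => [z0 | z_neq0]; first by rewrite q_def z0 mul0rn addr0.
case: no_segment; exists p, z; split=> // j j_le_k.
rewrite lat_to_real_shift; apply: (@in_conv_hull_segment _ _ _ _ _ k.+1) => //.
- exact: S_in_P.
- by rewrite -lat_to_real_shift -q_def; exact: S_in_P.
Qed.
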